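(* In the box problem with an exogenous ordering, every $\kappa$-thresholding policy is non-exposed. Moreover, the expected net value of running the $\kappa$-thresholding policy with target interval $X$ equals the expected value selected by the threshold stopping rule that observes the sequence $\kappa_1,\kappa_2,\ldots,\kappa_m$ and selects the first element belonging to $X$ (with value $0$ if none does).
   Context: Box problem: there are boxes $1,\ldots,m$. Box $i$ contains an independent non-negative random prize $v_i$ and has opening cost $c_i\ge0$. The priority $z_i$ is defined by $\mathbb{E}[(v_i-z_i)^+]=c_i$ (assumed well-defined), and the covered call value is $\kappa_i=\min\{v_i,z_i\}$. In the exogenous-ordering version, the searcher considers the boxes one by one in the order $1,\ldots,m$. For each box she decides whether to open it (paying $c_i$ and observing $v_i$) and, if opened, whether to claim its prize (and stop). She cannot return to a skipped box or to an unclaimed prize. The net value is the claimed prize (or $0$) minus the total cost of opened boxes. For a policy, let $A_i$ be the indicator that box $i$ is selected and $B_i$ the indicator that it is opened. The policy is non-exposed if $A_i=B_i$ at every sample point where $v_i>z_i$. A $\kappa$-thresholding policy with target interval $X=(\theta,\infty)$ or $X=[\theta,\infty)$ declines to open every box with $z_i\notin X$. For a box with $z_i\in X$, it opens the box and claims the prize if and only if $v_i\in X$. *)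

From HB Require Import structures.
From mathcomp Require Import all_boot all_order all_algebra.
From mathcomp Require Import all_classical all_reals all_analysis.
Set Implicit Arguments. Unset Strict Implicit. Unset Printing Implicit Defensive.
Import Order.TTheory GRing.Theory Num.Theory.
Local Open Scope ring_scope.
Local Open Scope classical_set_scope.

Section BoxProblem.
Context {d : measure_display} {T : measurableType d} {R : realType}.

(* Mutual independence of the finite family of real random variables v_i:
   product rule for preimages of arbitrary Borel sets (taking B i = setT
   yields the rule for every subfamily). *)
Definition mutually_independent (m : nat) (P : probability T R)
  (v : 'I_m -> T -> R) : Prop :=
  forall B : 'I_m -> set R, (forall i, measurable (B i)) ->
    P (\bigcap_(i in [set: 'I_m]) (v i @^-1` B i)) =
    (\prod_(i < m) P (v i @^-1` B i))%E.

Definition kappa (m : nat) (v : 'I_m -> T -> R) (z : 'I_m -> R) (i : 'I_m)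
  (w : T) : R := Num.min (v i w) (z i).

Definition non_exposed (m : nat) (v : 'I_m -> T -> R) (z : 'I_m -> R)
  (A B : 'I_m -> T -> bool) : Prop :=
  forall (i : 'I_m) (w : T), z i < v i w -> A i w = B i w.

(* net value: claimed prize minus total cost of opened boxes *)
Definition net_value (m : nat) (v : 'I_m -> T -> R) (c : 'I_m -> R)
  (A B : 'I_m -> T -> bool) (w : T) : R :=
  \sum_(i < m) ((A i w)%:R * v i w - (B i w)%:R * c i).

End BoxProblem.

Inductive target (R : realType) := OpenRay of R | ClosedRay of R.
Arguments OpenRay {R}. Arguments ClosedRay {R}.

Definition in_target (R : realType) (X : target R) (x : R) : bool :=
  match X with OpenRay th => th < x | ClosedRay th => th <= x end.

Section Thresholding.
Context {d : measure_display} {T : measurableType d} {R : realType}.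
Variables (m : nat) (v : 'I_m -> T -> R) (z : 'I_m -> R) (X : target R).

Definition kt_open (i : 'I_m) (w : T) : bool :=
  in_target X (z i) &&
  [forall j : 'I_m, (j < i)%N ==> ~~ (in_target X (z j) && in_target X (v j w))].

Definition kt_select (i : 'I_m) (w : T) : bool :=
  kt_open i w && in_target X (v i w).

End Thresholding.

Fixpoint first_in (R : realType) (X : target R) (s : seq R) : R :=
  match s with
  | [::] => 0
  | x :: s' => if in_target X x then x else first_in X s'
  end.

From HB Require Import structures.
From mathcomp Require Import all_boot all_order all_algebra.
From mathcomp Require Import all_classical all_reals all_analysis.
From mathcomp Require Import measurable_realfun.
Import Order.TTheory GRing.Theory Num.Theory.
Local Open Scope ring_scope.
Local Open Scope classical_set_scope.

(* Since X is an upper ray, an opened box has z_i in X, so v_i > z_i puts v_i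
   in X: the policy is non-exposed.  Split v_i = kappa_i + (v_i - z_i)^+.  A
   box that is opened but not claimed has z_i in X and v_i outside it, so
   v_i <= z_i and its excess (v_i - z_i)^+ vanishes.  Hence the net value is
     sum_i A_i kappa_i + sum_i B_i ((v_i - z_i)^+ - c_i),
   and the first sum is the first kappa_i lying in X.  The event B_i is
   determined by v_j for j < i, so by independence
   E[B_i (v_i - z_i)^+] = P(B_i) E[(v_i - z_i)^+] = P(B_i) c_i: the second sum
   has mean zero. *)

Section target_ray.
Context {R : realType}.
Implicit Types (X : target R) (x y : R).

Lemma in_target_le X {x y} : x <= y -> in_target X x -> in_target X y.
Proof.
by case: X => th /= xy; [move/lt_le_trans; apply | move/le_trans; apply].
Qed.

Lemma in_target_min X x y :
  in_target X (Num.min x y) = in_target X x && in_target X y.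
Proof. by case: X => th /=; rewrite ?lt_min ?le_min. Qed.

Lemma measurable_in_target X : measurable [set x | in_target X x].
Proof.
case: X => th; [rewrite -(set_itv_o_infty th) | rewrite -(set_itv_c_infty th)];
  exact: measurable_itv.
Qed.

Lemma forall_lt_lift {m} (i : 'I_m) (p : 'I_m.+1 -> bool) :
  [forall j : 'I_m.+1, (j < lift ord0 i)%N ==> p j] =
  p ord0 && [forall j : 'I_m, (j < i)%N ==> p (lift ord0 j)].
Proof.
apply/forallP/andP => [H | [p0 /forallP H] j].
  split; first exact: implyP (H ord0) _.
  by apply/forallP => j; apply/implyP => ji; apply: implyP (H (lift ord0 j)) _.
apply/implyP; case: (unliftP ord0 j) => [k -> | -> //].
by rewrite /= /bump /= !add1n ltnS; apply/implyP.
Qed.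

Lemma first_in_enum X m (f : 'I_m -> R) :
  first_in X [seq f i | i <- enum 'I_m] =
  \sum_(i < m) ((in_target X (f i) &&
     [forall j : 'I_m, (j < i)%N ==> ~~ in_target X (f j)])%:R * f i).
Proof.
elim: m f => [|m IH] f; first by rewrite enum_ord0 big_ord0.
rewrite enum_ordSl /= -map_comp IH big_ord_recl.
have -> : [forall j : 'I_m.+1, (j < @ord0 m)%N ==> ~~ in_target X (f j)].
  by apply/forallP.
have first_lift (i : 'I_m) :
    [forall j : 'I_m.+1, (j < lift ord0 i)%N ==> ~~ in_target X (f j)] =
    ~~ in_target X (f ord0) &&
    [forall j : 'I_m, (j < i)%N ==> ~~ in_target X (f (lift ord0 j))].
  exact: forall_lt_lift.
under [in RHS]eq_bigr do rewrite first_lift.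
case: ifP => f0 /=; last by rewrite mul0r add0r.
by rewrite mul1r big1 ?addr0 // => i _; rewrite andbF mul0r.
Qed.

End target_ray.

Lemma minr_add_maxr_subr0 (R : realDomainType) (x y : R) :
  Num.min x y + Num.max (x - y) 0 = x.
Proof.
have [xy|yx] := boolP (x <= y).
  by rewrite (min_l xy) (max_r (_ : x - y <= 0)) ?subr_le0 // addr0.
have {}yx : y <= x by rewrite ltW // ltNge.
by rewrite (min_r yx) (max_l (_ : 0 <= x - y)) ?subr_ge0 // addrC subrK.
Qed.

Lemma natr_mul_min_split (R : realDomainType) (a b : bool) (x y c : R) :
  (a ==> b) -> (b && ~~ a ==> (x <= y)) ->
  a%:R * x - b%:R * c = a%:R * Num.min x y + b%:R * (Num.max (x - y) 0 - c).
Proof.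
case: a; case: b => //= _ xy; rewrite ?mul1r ?mul0r ?add0r ?oppr0 //.
  by rewrite addrA minr_add_maxr_subr0.
by rewrite (max_r (_ : x - y <= 0)) ?subr_le0 // sub0r.
Qed.

Section indicators.
Context {d} {T : measurableType d} {R : realType}.
Implicit Type b : T -> bool.

Lemma measurable_preimageT d' (U : measurableType d') (f : T -> U) (B : set U) :
  measurable_fun setT f -> measurable B -> measurable (f @^-1` B).
Proof. by move=> mf mB; rewrite -[_ @^-1` _]setTI; exact: mf. Qed.

Lemma indic_setbE b w : \1_[set w | b w] w = (b w)%:R :> R.
Proof.
rewrite indicE.
case: (boolP (b w)) => bw; first by rewrite mem_set.
by rewrite memNset //= (negbTE bw).
Qed.

Lemma measurable_natr_bool b :
  measurable [set w | b w] -> measurable_fun setT (fun w => (b w)%:R : R).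
Proof.
by move=> mb; under eq_fun do rewrite -indic_setbE; exact: measurable_indic.
Qed.

Lemma integrable_natr_boolM {mu : {measure set T -> \bar R}} {b} {f : T -> R} :
  measurable [set w | b w] -> mu.-integrable setT (EFin \o f) ->
  mu.-integrable setT (EFin \o (fun w => (b w)%:R * f w)).
Proof.
move=> mb intf; apply: (le_integrable _ _ _ intf) => //.
  apply/measurable_EFinP/measurable_funM; first exact: measurable_natr_bool.
  exact/measurable_EFinP/(measurable_int _ intf).
move=> w _ /=; rewrite lee_fin normrM.
by case: (b w); rewrite ?normr1 ?normr0 ?mul1r ?mul0r.
Qed.

End indicators.

Section independent_factor.
Local Open Scope ereal_scope.
Context {d} {T : measurableType d} {R : realType} (P : probability T R).

Lemma ge0_expectation_indicM (E : set T) (Y : T -> R) :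
  measurable E -> measurable_fun setT Y -> (forall w, (0 <= Y w)%R) ->
  (forall r, (0 <= r)%R ->
    P (E `&` Y @^-1` `]r, +oo[) = P E * P (Y @^-1` `]r, +oo[)) ->
  'E_P[(\1_E \* Y)%R] = P E * 'E_P[Y].
Proof.
move=> mE mY Y0 indep.
have mEY : measurable_fun setT (\1_E \* Y)%R.
  by apply: measurable_funM => //; exact: measurable_indic.
have EY0 w : (0 <= (\1_E \* Y)%R w)%R by rewrite /= mulr_ge0 // indicE.
pose rvY : {RV P >-> R} := mfun_Sub (mem_set mY : Y \in mfun).
pose rvEY : {RV P >-> R} := mfun_Sub (mem_set mEY : _ \in mfun).
rewrite [LHS](@ge0_expectation_ccdf _ _ _ _ rvEY EY0).
rewrite [in RHS](@ge0_expectation_ccdf _ _ _ _ rvY Y0).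
rewrite -ge0_integralZl //; last exact: measurable_funS (ccdf_measurable rvY).
apply: eq_integral => r; rewrite inE /= in_itv /= andbT => r0.
rewrite /ccdf /distribution /pushforward /= -indep //; congr (P _).
apply/seteqP; split => w /=; rewrite !in_itv /= !andbT indicE.
  case: (boolP (w \in E)) => [/set_mem Ew | _]; first by rewrite mul1r.
  by rewrite mul0r => /(le_lt_trans r0); rewrite ltxx.
by move=> [Ew Yw]; rewrite mem_set // mul1r.
Qed.

Variables (m : nat) (v : 'I_m -> T -> R).
Hypothesis mv : forall i, measurable_fun setT (v i).
Hypothesis indep_v : mutually_independent P v.

Lemma mutually_independent_setI (S : 'I_m -> set R) (i : 'I_m) (A : set R) :
  (forall j, measurable (S j)) -> S i = setT -> measurable A ->
  P (\bigcap_(j in setT) v j @^-1` S j `&` v i @^-1` A) =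
  P (\bigcap_(j in setT) v j @^-1` S j) * P (v i @^-1` A).
Proof.
move=> mS Si mA; pose S' j := if j == i then A else S j.
have mS' j : measurable (S' j) by rewrite /S'; case: ifP.
have -> : \bigcap_(j in setT) v j @^-1` S j `&` v i @^-1` A =
          \bigcap_(j in setT) v j @^-1` S' j.
  apply/seteqP; split => w /=.
    by move=> [Sw Aw] j _; rewrite /S'; case: eqP => [->|_] //; exact: Sw.
  move=> S'w; split; last by have := S'w i I; rewrite /S' eqxx.
  by move=> j _; have := S'w j I; rewrite /S'; case: eqP => [->|//]; rewrite Si.
rewrite (indep_v S' mS') (indep_v S mS) (bigD1 i) //= [in RHS](bigD1 i) //= Si.
rewrite preimage_setT probability_setT mul1e /S' eqxx muleC; congr (_ * _).
by apply: eq_bigr => j /negPf ->.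
Qed.

Lemma expectation_indic_bigcapM (S : 'I_m -> set R) (i : 'I_m) (g : R -> R) :
  (forall j, measurable (S j)) -> S i = setT ->
  measurable_fun setT g -> (forall x, (0 <= g x)%R) ->
  'E_P[(\1_(\bigcap_(j in setT) v j @^-1` S j) \* (g \o v i))%R] =
  P (\bigcap_(j in setT) v j @^-1` S j) * 'E_P[g \o v i].
Proof.
move=> mS Si mg g0; apply: ge0_expectation_indicM => //.
- apply: fin_bigcap_measurable => [|j _]; first exact: finite_finset.
  exact: measurable_preimageT.
- exact: measurableT_comp.
- by move=> w; exact: g0.
- move=> r _; rewrite comp_preimage; apply: mutually_independent_setI => //.
  exact: measurable_preimageT.
Qed.

End independent_factor.

Section expectation_bigsum.
Local Open Scope ereal_scope.
Context {d} {T : measurableType d} {R : realType} (P : probability T R).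

Lemma expectation_sum_ord {m} (F : 'I_m -> T -> R) :
  (forall i, P.-integrable setT (EFin \o F i)) ->
  'E_P[fun w => \sum_(i < m) F i w]%R = \sum_(i < m) 'E_P[F i].
Proof.
move=> intF; rewrite expectation.unlock; under eq_integral do rewrite -sumEFin.
exact: integral_sum.
Qed.

End expectation_bigsum.

Section kappa_thresholding.
Context {d} {T : measurableType d} {R : realType} (P : probability T R).
Variables (m : nat) (v : 'I_m -> T -> R) (z : 'I_m -> R) (X : target R).
Hypothesis mv : forall i, measurable_fun setT (v i).
Hypothesis indep_v : mutually_independent P v.

Definition kt_pass (i j : 'I_m) : set R :=
  if (j < i)%N && in_target X (z j) then ~` [set x | in_target X x] else setT.

Lemma kt_openE i : in_target X (z i) ->
  [set w | kt_open v z X i w] = \bigcap_(j in setT) v j @^-1` kt_pass i j.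
Proof.
move=> zi; apply/seteqP; split => w /=; rewrite /kt_open zi /=.
  move=> /forallP pass j _; rewrite /kt_pass; case: ifP => // /andP[ji zj].
  by have := pass j; rewrite ji zj => /negP.
move=> pass; apply/forallP => j; apply/implyP => ji; apply/negP => /andP[zj vj].
by have := pass j I; rewrite /kt_pass ji zj.
Qed.

Lemma kt_open_set0 i :
  ~~ in_target X (z i) -> [set w | kt_open v z X i w] = set0.
Proof.
by move=> zi; apply/seteqP; split => w //=; rewrite /kt_open (negbTE zi).
Qed.

Lemma measurable_kt_open i : measurable [set w | kt_open v z X i w].
Proof.
have [zi|zi] := boolP (in_target X (z i)); last by rewrite kt_open_set0.
rewrite kt_openE //; apply: fin_bigcap_measurable => [|j _].
  exact: finite_finset.
apply: measurable_preimageT => //; rewrite /kt_pass; case: ifP => // _.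
apply: measurableC; exact: measurable_in_target.
Qed.

Lemma measurable_kt_select i : measurable [set w | kt_select v z X i w].
Proof.
rewrite (_ : [set w | _] = [set w | kt_open v z X i w] `&`
                            v i @^-1` [set x | in_target X x]).
  apply: measurableI; first exact: measurable_kt_open.
  apply: measurable_preimageT => //; exact: measurable_in_target.
by apply/seteqP; split => w /= /andP.
Qed.

Lemma expectation_kt_openM i (g : R -> R) :
  measurable_fun setT g -> (forall x, 0 <= g x) ->
  ('E_P[fun w => (kt_open v z X i w)%:R * g (v i w)]%R =
   P [set w | kt_open v z X i w] * 'E_P[g \o v i])%E.
Proof.
move=> mg g0; under eq_fun do rewrite -indic_setbE.
have [zi|zi] := boolP (in_target X (z i)); last first.
  rewrite kt_open_set0 // measure0 mul0e; under eq_fun do rewrite indic0 mul0r.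
  exact: expectation_cst.
rewrite kt_openE //; apply: expectation_indic_bigcapM => //.
- move=> j; rewrite /kt_pass; case: ifP => // _.
  apply: measurableC; exact: measurable_in_target.
- by rewrite /kt_pass ltnn.
Qed.

Lemma kt_non_exposed : non_exposed v z (kt_select v z X) (kt_open v z X).
Proof.
move=> i w /ltW zv; rewrite /kt_select.
case: (boolP (kt_open v z X i w)) => //=.
by case/andP => /(in_target_le X zv).
Qed.

Lemma kt_open_le i w :
  kt_open v z X i w -> ~~ kt_select v z X i w -> v i w <= z i.
Proof.
move=> open_i; rewrite /kt_select open_i /= leNgt; apply: contra => /ltW zv.
by apply: (in_target_le X zv); case/andP: open_i.
Qed.

Lemma first_in_kappa w :
  first_in X [seq kappa v z i w | i <- enum 'I_m] =
  \sum_(i < m) (kt_select v z X i w)%:R * kappa v z i w.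
Proof.
rewrite first_in_enum; apply: eq_bigr => i _; congr (_%:R * _).
rewrite /kt_select /kt_open /kappa in_target_min.
under eq_forallb => j do rewrite in_target_min andbC.
by rewrite -andbA andbC.
Qed.

Variable c : 'I_m -> R.
Hypothesis v_ge0 : forall i w, 0 <= v i w.
Hypothesis c_ge0 : forall i, 0 <= c i.
Hypothesis excess_c : forall i,
  ('E_P[fun w => Num.max (v i w - z i)%R 0%R] = (c i)%:E)%E.

Let excess i w := Num.max (v i w - z i) 0.
Let gain i w := (kt_select v z X i w)%:R * kappa v z i w.
Let surplus i w := (kt_open v z X i w)%:R * (excess i w - c i).

Lemma net_value_kt_split w :
  net_value v c (kt_select v z X) (kt_open v z X) w =
  \sum_(i < m) (gain i w + surplus i w).
Proof.
apply: eq_bigr => i _; apply: natr_mul_min_split.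
  by apply/implyP => /andP[].
by apply/implyP => /andP[]; exact: kt_open_le.
Qed.

Lemma integrable_excess i : P.-integrable setT (EFin \o excess i).
Proof.
apply/integrableP; split.
  apply/measurable_EFinP/measurable_maxr => //.
  by apply: measurable_funB => //; exact: measurable_cst.
under eq_integral do rewrite /= ger0_norm ?le_max ?lexx ?orbT //.
by have := excess_c i; rewrite expectation.unlock => ->; rewrite ltry.
Qed.

Lemma integrable_kappa i : P.-integrable setT (EFin \o kappa v z i).
Proof.
have int_z := finite_measure_integrable_cst P `|z i| measurableT.
apply: (le_integrable _ _ _ int_z) => //.
  apply/measurable_EFinP/measurable_minr => //; exact: measurable_cst.
move=> w _ /=; rewrite lee_fin normr_id /kappa.
have [vz|zv] := boolP (v i w <= z i); last by rewrite (min_r (ltW _)) // ltNge.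
by rewrite (min_l vz) !ger0_norm // (le_trans (v_ge0 i w)).
Qed.

Lemma integrable_surplus i : P.-integrable setT (EFin \o surplus i).
Proof.
apply: integrable_natr_boolM; first exact: measurable_kt_open.
apply: (eq_integrable measurableT _ _ _ (integrableB measurableT
  (integrable_excess i) (finite_measure_integrable_cst _ (c i) measurableT))).
by move=> w _; rewrite /= EFinB.
Qed.

Lemma expectation_surplus i : ('E_P[surplus i] = 0)%E.
Proof.
pose open_mul (g : R -> R) w := (kt_open v z X i w)%:R * g (v i w).
have -> : surplus i =
    open_mul (fun x : R => Num.max (x - z i) 0) \- open_mul (cst (c i)).
  by apply/funext => w; rewrite /surplus /open_mul /= mulrBr.
have mopen := measurable_kt_open i.
rewrite expectationB; first last.
- apply/Lfun1_integrable/(integrable_natr_boolM mopen).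
  exact: finite_measure_integrable_cst.
- exact/Lfun1_integrable/(integrable_natr_boolM mopen)/integrable_excess.
have E_excess : ('E_P[(fun x => Num.max (x - z i)%R 0%R) \o v i] = (c i)%:E)%E.
  exact: excess_c.
have E_cost : ('E_P[cst (c i) \o v i] = (c i)%:E)%E by exact: expectation_cst.
rewrite !expectation_kt_openM // ?E_excess ?E_cost.
- by rewrite subee // fin_numM // fin_num_measure.
- by move=> x; exact: c_ge0.
- apply: measurable_maxr => //.
  by apply: measurable_funB => //; exact: measurable_cst.
- by move=> x; rewrite le_max lexx orbT.
Qed.

Lemma expectation_net_value_kt :
  ('E_P[net_value v c (kt_select v z X) (kt_open v z X)] =
   'E_P[fun w => first_in X [seq kappa v z i w | i <- enum 'I_m]])%E.
Proof.
have int_gain i : P.-integrable setT (EFin \o gain i).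
  exact: integrable_natr_boolM (measurable_kt_select i) (integrable_kappa i).
have int_sum i : P.-integrable setT (EFin \o (gain i \+ surplus i)).
  apply: (eq_integrable measurableT _ _ _
    (integrableD measurableT (int_gain i) (integrable_surplus i))).
  by move=> w _; rewrite /= EFinD.
have -> : net_value v c (kt_select v z X) (kt_open v z X) =
          fun w => \sum_(i < m) (gain i \+ surplus i) w.
  by apply/funext => w; exact: net_value_kt_split.
rewrite (expectation_sum_ord P (fun i => gain i \+ surplus i)) //.
transitivity (\sum_(i < m) 'E_P[gain i])%E.
  apply: eq_bigr => i _.
  rewrite expectationD ?expectation_surplus ?adde0 //; apply/Lfun1_integrable.
    exact: int_gain.
  exact: integrable_surplus.
rewrite -expectation_sum_ord //; congr 'E_P[_]%E; apply/funext => w.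
by rewrite first_in_kappa.
Qed.

End kappa_thresholding.

Local Open Scope ereal_scope.

Theorem mainTheorem11 (d : measure_display) (T : measurableType d)
  (R : realType) (P : probability T R) (m : nat)
  (v : 'I_m -> T -> R) (c z : 'I_m -> R) (X : target R) :
  (forall i, measurable_fun setT (v i)) ->
  (forall i w, (0 <= v i w)%R) ->
  mutually_independent P v ->
  (forall i, (0 <= c i)%R) ->
  (forall i, 'E_P[fun w => Num.max (v i w - z i)%R 0%R] = (c i)%:E) ->
  non_exposed v z (kt_select v z X) (kt_open v z X) /\
  'E_P[net_value v c (kt_select v z X) (kt_open v z X)] =
   'E_P[fun w => first_in X [seq kappa v z i w | i <- enum 'I_m]].
Proof.
move=> mv v_ge0 indep_v c_ge0 excess_c; split; first exact: kt_non_exposed.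
exact: expectation_net_value_kt.
Qed.
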